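(* Let $p\ge0$, $k\ge1$ and $0\le s\le r-1$. The stratum $\mathfrak{F}_sV_r=F_sV_r\setminus F_{s-1}V_r$ is a closed submanifold of $F_sV_r$ of codimension $s\cdot p$, i.e. of dimension $p\cdot(r-s)+r\cdot k$.
   Context: Here $q=1$: $V_r=V^k_r(\mathbb{R}^{p,1})$ is the space of unordered collections of $r$ pairwise disjoint unordered clusters in $\mathbb{R}^{p+1}=\mathbb{R}^p\times\mathbb{R}$, each cluster a set of $k$ distinct points with the same $\mathbb{R}^p$-coordinate; it is a manifold of dimension $pr+kr$. Two clusters are aligned if they have the same $\mathbb{R}^p$-coordinate, and entangled if their convex hulls (segments in a vertical line) intersect. For a configuration, consider the equivalence relation on its set of clusters generated by ''aligned and entangled''; the dexterity $\delta$ is the number of equivalence classes. For $s\ge-1$, $F_sV_r=\{[Z]\in V_r:\delta[Z]\ge r-s\}$ (an open subset of $V_r$), so $F_{-1}V_r=\emptyset$ and $F_{r-1}V_r=V_r$. *)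

From HB Require Import structures.
From mathcomp Require Import all_boot all_order all_algebra.
From mathcomp Require Import all_classical all_reals all_analysis.
Set Implicit Arguments. Unset Strict Implicit. Unset Printing Implicit Defensive.
Import Order.TTheory GRing.Theory Num.Theory.
Import numFieldNormedType.Exports.
Local Open Scope classical_set_scope.
Local Open Scope ring_scope.

Section Smooth.
Variable R : realType.

Fixpoint Cn {V W : normedModType R} (n : nat) (f : V -> W) (U : set V) : Prop :=
  match n with
  | 0 => forall x, U x -> {for x, continuous f}
  | n.+1 => (forall x, U x -> {for x, continuous f}) /\
            (forall x v, U x -> derivable f x v) /\
            (forall v : V, Cn n ('D_v f) U)
  end.

Definition smooth_on {V W : normedModType R} (f : V -> W) (U : set V) : Prop :=
  forall n, Cn n f U.

Definition submanifold_of {m n : nat} (S M : set 'M[R]_(m, n)) (d : nat) : Prop :=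
  S `<=` M /\
  forall a, S a -> exists (c : nat) (W : set 'M[R]_(m, n)) (g : 'M[R]_(m, n) -> 'rV[R]_c),
    [/\ (c + d)%N = (m * n)%N, open W, W a & W `<=` M] /\
    smooth_on g W /\
    (S `&` W) = [set x | W x /\ g x = 0] /\
    (forall x, (S `&` W) x -> forall w : 'rV[R]_c, exists v, 'D_v g x = w).

Definition rel_closed {T : topologicalType} (S M : set T) : Prop :=
  exists C, closed C /\ S = C `&` M.

Definition closed_submanifold_of {m n : nat} (S M : set 'M[R]_(m, n)) (d : nat) :=
  rel_closed S M /\ submanifold_of S M d.

End Smooth.

(* An ordered configuration is a matrix z : 'M[R]_(r, p + k); row i is the
   i-th cluster: its first p entries are the R^p-coordinate, its last k entries
   are the R-coordinates (heights) of the k points of the cluster, listed in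
   strictly increasing order.  V_r is the quotient of the set of such matrices
   with pairwise disjoint clusters by the free action of the symmetric group
   S_r permuting rows; the projection is an r!-sheeted covering map. *)
Section Config.
Variables (R : realType) (p k r : nat).
Local Notation mat := ('M[R]_(r, p + k)).

Definition base (z : mat) (i : 'I_r) : 'rV[R]_p := \row_(j < p) z i (lshift k j).
Definition height (z : mat) (i : 'I_r) (l : 'I_k) : R := z i (rshift p l).

Definition cluster (z : mat) (i : 'I_r) : set ('rV[R]_p * R) :=
  [set pt | pt.1 = base z i /\ exists l, pt.2 = height z i l].

(* the convex hull of cluster i is the vertical segment {base} x [min, max]:
   the convex hull of the heights in the real line *)
Definition hull (z : mat) (i : 'I_r) : set ('rV[R]_p * R) :=
  [set pt | pt.1 = base z i /\
            exists l l', height z i l <= pt.2 <= height z i l'].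

Definition ordered_config (z : mat) : Prop :=
  (forall i (l l' : 'I_k), (l < l')%N -> height z i l < height z i l') /\
  (forall i j, i != j -> cluster z i `&` cluster z j = set0).

Definition aligned (z : mat) (i j : 'I_r) : Prop := base z i = base z j.
Definition entangled (z : mat) (i j : 'I_r) : Prop := hull z i `&` hull z j !=set0.

Definition al_ent (z : mat) : rel 'I_r :=
  fun i j => `[< aligned z i j /\ entangled z i j >].

Definition al_ent_equiv (z : mat) : rel 'I_r :=
  connect (fun i j => al_ent z i j || al_ent z j i).

Definition dexterity (z : mat) : nat :=
  #|[set finset (al_ent_equiv z i) | i : 'I_r]%SET|.

(* lift of the filtration piece F_s V_r, s : int (s >= -1) *)
Definition Ffilt (s : int) : set mat :=
  [set z | ordered_config z /\ (r%:Z - s <= (dexterity z)%:Z)%R].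

Definition stratum (s : int) : set mat := Ffilt s `\` Ffilt (s - 1).

End Config.

From HB Require Import structures.
From mathcomp Require Import all_boot all_order all_algebra.
From mathcomp Require Import all_classical all_reals all_analysis.
From mathcomp Require Import zify.
(* Imported last, so that [cluster] is the cluster of a configuration and not
   the cluster points of a filter. *)
Set Implicit Arguments. Unset Strict Implicit. Unset Printing Implicit Defensive.
Import Order.TTheory GRing.Theory Num.Theory.
Import numFieldNormedType.Exports.
Local Open Scope classical_set_scope.
Local Open Scope ring_scope.

(* Near an ordered configuration z, every configuration w is ordered, the
   relation "aligned and entangled" of w is contained in that of z, and
   clusters that are aligned and entangled in z stay entangled in w as long as
   they stay aligned.  Hence the dexterity can only go up near z: every F_t is
   open, and the stratum, where the dexterity is exactly r - s, is closed in
   F_s.  Near a point a of the stratum, w lies in the stratum iff w has the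
   same equivalence classes as a, i.e. iff in each of the r - s classes of a
   every cluster has the R^p-coordinate of a fixed representative of the class.
   This is the zero set of the linear submersion
   w |-> (base w i - base w (root i)) over the s non-representatives i, which
   has s * p independent coordinates. *)

Section Classes.
Local Open Scope nat_scope.
Variable T : finType.
Implicit Types e : rel T.
(* Otherwise [root] and [rootP] refer to polynomial roots. *)
Local Notation root := fingraph.root.
Local Notation rootP := fingraph.rootP.

Definition symclos e : rel T := fun i j => e i j || e j i.

Definition n_classes e : nat :=
  #|[set finset (connect (symclos e) i) | i : T]%SET|.

Lemma symclos_connect_sym e : connect_sym (symclos e).
Proof. by apply: sym_connect_sym => i j; rewrite /symclos orbC. Qed.

Lemma n_classesE e : n_classes e = #|roots (symclos e)|.
Proof.
have sym_e := symclos_connect_sym e.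
pose cls i := finset (connect (symclos e) i).
have cls_root i : cls (root (symclos e) i) = cls i.
  by apply/setP => j; rewrite !inE -(same_connect sym_e (connect_root _ i)).
rewrite /n_classes -/cls.
have -> : [set cls i | i : T]%SET = (cls @: [set x in roots (symclos e)])%SET.
  apply/setP => X; apply/imsetP/imsetP => [[i _ ->]|[x _ ->]]; last by exists x.
  exists (root (symclos e) i); last by rewrite cls_root.
  by rewrite inE; apply: (roots_root sym_e).
rewrite card_in_imset ?cardsE // => x y; rewrite !inE => rx ry.
move/setP/(_ y); rewrite !inE connect0 => /(rootP sym_e).
by move=> rxy; apply/eqP; rewrite -(eqP rx) rxy.
Qed.

Section Refinement.
Variables e1 e2 : rel T.
Hypothesis e12 : subrel e1 e2.

Lemma connect_refine : subrel (connect (symclos e1)) (connect (symclos e2)).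
Proof.
apply: connect_sub => i j /orP[] /e12 e2ij; apply: connect1.
  by rewrite /symclos e2ij.
by rewrite /symclos e2ij orbT.
Qed.

Lemma root_refine x :
  root (symclos e2) (root (symclos e1) x) = root (symclos e2) x.
Proof.
apply/esym/(rootP (symclos_connect_sym e2)).
exact/connect_refine/connect_root.
Qed.

Lemma roots_refine :
  [set root (symclos e2) x | x in roots (symclos e1)]%SET =
  [set x in roots (symclos e2)]%SET.
Proof.
apply/setP => y; rewrite inE; apply/imsetP/idP => [[x _ ->]|ry].
  apply: (roots_root (symclos_connect_sym e2)).
exists (root (symclos e1) y).
  by rewrite inE; apply: (roots_root (symclos_connect_sym e1)).
by rewrite root_refine (eqP ry).
Qed.

Lemma n_classes_refine : n_classes e2 <= n_classes e1.
Proof.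
rewrite !n_classesE -(cardsE (roots (symclos e2))) -roots_refine.
exact: leq_imset_card.
Qed.

Lemma connect_refine_eq : n_classes e1 = n_classes e2 ->
  subrel (connect (symclos e2)) (connect (symclos e1)).
Proof.
have sym1 := symclos_connect_sym e1; have sym2 := symclos_connect_sym e2.
rewrite !n_classesE -(cardsE (roots (symclos e2))) -roots_refine.
move=> /esym/eqP/imset_injP inj_root2 i j.
have root1P x : root (symclos e1) x \in roots (symclos e1).
  exact: (roots_root sym1).
move=> /(rootP sym2) eq2; apply/(rootP sym1).
by apply: inj_root2 (root1P i) (root1P j) _; rewrite !root_refine.
Qed.

End Refinement.
End Classes.

Section LinearSmooth.
Variables (R : realType) (V W : normedModType R).

Lemma Cn_cst (y : W) n (U : set V) : Cn n (cst y) U.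
Proof.
elim: n y => [|n IHn] y /=; first by move=> x _; exact: cst_continuous.
split; first by move=> x _; exact: cst_continuous.
split; first by move=> x v _; exact: derivable_cst.
move=> v; rewrite (_ : 'D_v (cst y) = cst 0) //.
by apply/funext => x; exact: derive_cst.
Qed.

Lemma derive_linear (f : {linear V -> W}) x v : continuous f -> 'D_v f x = f v.
Proof.
by move=> f_cont; rewrite deriveE ?diff_lin //; exact: linear_differentiable.
Qed.

Lemma linear_smooth (f : {linear V -> W}) (U : set V) :
  continuous f -> smooth_on f U.
Proof.
move=> f_cont [|n] /=; first by move=> x _; exact: f_cont.
split; first by move=> x _; exact: f_cont.
split; first by move=> x v _; exact/diff_derivable/linear_differentiable.
move=> v; rewrite (_ : 'D_v f = cst (f v)); first exact: Cn_cst.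
by apply/funext => x; exact: derive_linear.
Qed.

End LinearSmooth.

Section EntryDifferences.
Variables (R : realType) (m n c : nat).
Variables (a1 a2 : 'I_c -> 'I_m) (b : 'I_c -> 'I_n).

Definition entry_diff (w : 'M[R]_(m, n)) : 'rV[R]_c :=
  \row_t (w (a1 t) (b t) - w (a2 t) (b t)).

Lemma entry_diff_is_linear : linear entry_diff.
Proof. by move=> x u v; apply/rowP => t; rewrite !mxE mulrBr addrACA opprD. Qed.

HB.instance Definition _ :=
  GRing.isLinear.Build R 'M[R]_(m, n) 'rV[R]_c _ entry_diff entry_diff_is_linear.

Lemma entry_diff_continuous : continuous entry_diff.
Proof.
move=> u A /nbhs_ballP[e /= e_gt0 eA]; apply/nbhs_ballP.
exists (e / 2); first by rewrite /= divr_gt0.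
move=> v [_ uv]; apply: eA; split => // i t; rewrite !mxE /ball /=.
rewrite opprD addrACA -opprD.
apply: le_lt_trans (ler_normB _ _) _.
by rewrite (splitr e) ltrD ?uv.
Qed.

Lemma entry_diff_smooth (U : set 'M[R]_(m, n)) : smooth_on entry_diff U.
Proof. exact/linear_smooth/entry_diff_continuous. Qed.

Lemma derive_entry_diff x v : 'D_v entry_diff x = entry_diff v.
Proof. exact/derive_linear/entry_diff_continuous. Qed.

Lemma entry_diff_eq0 w :
  entry_diff w = 0 <-> forall t, w (a1 t) (b t) = w (a2 t) (b t).
Proof.
split=> [/rowP eq0 t | eq_w]; last by apply/rowP => t; rewrite !mxE eq_w subrr.
by apply/eqP; rewrite -subr_eq0; have := eq0 t; rewrite !mxE => ->.
Qed.

Lemma entry_diff_onto : injective (fun t => (a1 t, b t)) ->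
  (forall t t', a2 t != a1 t') -> forall y, exists w, entry_diff w = y.
Proof.
move=> inj_a1b a2_a1 y.
exists (\matrix_(i, j) if [pick t | (a1 t, b t) == (i, j)] is Some t then y 0 t else 0).
apply/rowP => t; rewrite !mxE.
case: pickP => [t' /eqP/inj_a1b -> | /(_ t)]; last by rewrite eqxx.
case: pickP => [t2 /eqP [/eqP] | _]; last by rewrite subr0.
by rewrite eq_sym (negbTE (a2_a1 t t2)).
Qed.

End EntryDifferences.

(* [filter_forall] itself does not find the [Filter] instance of [nbhs z] when
   [z] is a matrix. *)
Lemma near_forall (X : topologicalType) (I : finType) (z : X) (P : I -> X -> Prop) :
  (forall i, \forall w \near z, P i w) -> \forall w \near z, forall i, P i w.
Proof. exact: filter_forall. Qed.

Section EntryNear.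
Variables (R : realType) (m n : nat).
Implicit Type z : 'M[R]_(m, n).

Lemma entry_lt_near z i1 j1 i2 j2 : z i1 j1 < z i2 j2 ->
  \forall w \near z, (w : 'M[R]_(m, n)) i1 j1 < w i2 j2.
Proof.
rewrite -subr_gt0 => lt_z.
have cont : continuous (fun w : 'M[R]_(m, n) => w i2 j2 - w i1 j1).
  by move=> w; apply: continuousB; exact: coord_continuous.
have near_z : \forall w \near z, 0 < (w : 'M[R]_(m, n)) i2 j2 - w i1 j1.
  exact: cont z _ (open_nbhs_nbhs (conj (@open_gt _ 0) lt_z)).
by apply: filterS near_z => w; rewrite subr_gt0.
Qed.

Lemma entry_neq_near z i1 j1 i2 j2 : z i1 j1 != z i2 j2 ->
  \forall w \near z, (w : 'M[R]_(m, n)) i1 j1 != w i2 j2.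
Proof.
rewrite neq_lt => /orP[] /entry_lt_near; apply: filterS => w.
  by move=> /lt_eqF ->.
by move=> /gt_eqF ->.
Qed.

End EntryNear.

Section Configurations.
Variables (R : realType) (p k r : nat).
Local Notation mat := 'M[R]_(r, p + k).
Implicit Types (z w : mat) (i j : 'I_r).

Lemma base_neq_near z i j : base z i != base z j ->
  \forall w \near z, base w i != base w j.
Proof.
move=> /eqP neq_ij.
have [q neq_q] : exists q, z i (lshift k q) != z j (lshift k q).
  apply/existsP; apply: contra_notT neq_ij => /existsPn eq_q.
  by apply/rowP => q; rewrite !mxE; apply/eqP/negPn/eq_q.
apply: filterS (entry_neq_near neq_q) => w; apply: contra => /eqP/rowP/(_ q).
by rewrite !mxE => ->.
Qed.

Lemma cluster_disjP z i j :
  cluster z i `&` cluster z j = set0 <->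
  (aligned z i j -> forall l l', height z i l != height z j l').
Proof.
split=> [disj al l l'|sep].
  apply/eqP => eq_h.
  suff : (cluster z i `&` cluster z j) (base z i, height z i l) by rewrite disj.
  by split; split=> //; [exists l | exists l'].
apply/seteqP; split=> [[x h] [[/= -> [l ->]] [/= al [l' eq_h]]]|//].
by have := sep al l l'; rewrite eq_h eqxx.
Qed.

Definition increasing_heights z :=
  forall i (l l' : 'I_k), (l < l')%N -> height z i l < height z i l'.

Lemma increasing_heights_near z : increasing_heights z ->
  \forall w \near z, increasing_heights w.
Proof.
move=> incr; rewrite /increasing_heights.
apply: near_forall => i; apply: near_forall => l.
apply: near_forall => l'; have [/(incr i)/entry_lt_near|_] := ltnP l l'.
  by apply: filterS => w lt_w _.
by apply: filterE.
Qed.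

Lemma disjoint_clusters_near z i j : cluster z i `&` cluster z j = set0 ->
  \forall w \near z, cluster w i `&` cluster w j = set0.
Proof.
move=> /cluster_disjP sep_z.
have [al|/base_neq_near] := eqVneq (base z i) (base z j); last first.
  by apply: filterS => w /eqP nal; apply/cluster_disjP.
have : \forall w \near z, forall l l', height w i l != height w j l'.
  apply: near_forall => l; apply: near_forall => l'.
  exact: entry_neq_near (sep_z al l l').
by apply: filterS => w sep_w; apply/cluster_disjP.
Qed.

Lemma ordered_config_near z : ordered_config z ->
  \forall w \near z, ordered_config w.
Proof.
move=> [incr disj].
have disj_near : \forall w \near z,
    forall i j, i != j -> cluster w i `&` cluster w j = set0.
  apply: near_forall => i; apply: near_forall => j.
  have [<-|neq_ij] := eqVneq i j; first exact: filterE.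
  by apply: filterS (disjoint_clusters_near (disj i j neq_ij)) => w ? _.
by apply: filterS2 (increasing_heights_near incr) disj_near => w.
Qed.

Definition hulls_overlap z i j :=
  (exists l l', height z i l <= height z j l') /\
  (exists l l', height z j l <= height z i l').

Lemma entangledP z i j : entangled z i j <-> aligned z i j /\ hulls_overlap z i j.
Proof.
split=> [[[x h] [[/= -> [l1 [l2 /andP[h1 h2]]]] [/= al [l3 [l4 /andP[h3 h4]]]]]]|].
  split=> //; split; first by exists l1, l4; apply: le_trans h4.
  by exists l3, l2; apply: le_trans h2.
move=> [al [[l1 [l4 le14]] [l3 [l2 le32]]]].
have [le13|lt31] := leP (height z i l1) (height z j l3).
  exists (base z i, height z j l3); split; split=> //.
    by exists l1, l2; rewrite le13 le32.
  by exists l3, l3; rewrite lexx.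
exists (base z i, height z i l1); split; split=> //.
  by exists l1, l1; rewrite lexx.
by exists l3, l4; rewrite (ltW lt31) le14.
Qed.

Lemma hulls_overlap_near_inv z i j :
  \forall w \near z, hulls_overlap w i j -> hulls_overlap z i j.
Proof.
have : \forall w \near z, forall l1 l4 l3 l2,
    height w i l1 <= height w j l4 -> height w j l3 <= height w i l2 ->
    hulls_overlap z i j.
  apply: near_forall => l1; apply: near_forall => l4.
  apply: near_forall => l3; apply: near_forall => l2.
  have [le14|lt41] := leP (height z i l1) (height z j l4); last first.
    by apply: filterS (entry_lt_near lt41) => w /lt_geF ->.
  have [le32|lt23] := leP (height z j l3) (height z i l2); last first.
    by apply: filterS (entry_lt_near lt23) => w /lt_geF ->.
  by apply: filterE => w _ _; split; [exists l1, l4 | exists l3, l2].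
apply: filterS => w ov_z [[l1 [l4 le14]] [l3 [l2 le32]]].
exact: ov_z le14 le32.
Qed.

Lemma al_ent_near_inv z i j : \forall w \near z, al_ent w i j -> al_ent z i j.
Proof.
have [al|/base_neq_near] := eqVneq (base z i) (base z j); last first.
  by apply: filterS => w /eqP nal /asboolP[/nal].
apply: filterS (hulls_overlap_near_inv z i j) => w ov.
move=> /asboolP[_ /entangledP[_ /ov ov_z]].
by apply/asboolP; split=> //; apply/entangledP.
Qed.

Lemma hulls_overlap_near z i j : ordered_config z -> aligned z i j ->
  hulls_overlap z i j -> \forall w \near z, hulls_overlap w i j.
Proof.
move=> [_ disj] al [[l1 [l4 le14]] [l3 [l2 le32]]].
have [<-|neq_ij] := eqVneq i j.
  by apply: filterE => w; split; exists l1, l1; rewrite lexx.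
have /cluster_disjP/(_ al) sep := disj i j neq_ij.
have lt14 : height z i l1 < height z j l4 by rewrite lt_neqAle sep.
have lt32 : height z j l3 < height z i l2 by rewrite lt_neqAle eq_sym sep.
apply: filterS2 (entry_lt_near lt14) (entry_lt_near lt32) => w /ltW ? /ltW ?.
by split; [exists l1, l4 | exists l3, l2].
Qed.

Lemma entangled_near z i j : ordered_config z -> al_ent z i j ->
  \forall w \near z, aligned w i j -> entangled w i j.
Proof.
move=> oz /asboolP[al /entangledP[_ ov]].
by apply: filterS (hulls_overlap_near oz al ov) => w ov_w al_w; apply/entangledP.
Qed.

End Configurations.

Section Strata.
Variables (R : realType) (p k r : nat).
Local Notation mat := 'M[R]_(r, p + k).
Implicit Types (z w : mat) (i j : 'I_r).

Definition small_perturbation z w :=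
  [/\ ordered_config w, subrel (al_ent w) (al_ent z) &
      forall i j, al_ent z i j -> aligned w i j -> entangled w i j].

Lemma small_perturbation_near z : ordered_config z ->
  \forall w \near z, small_perturbation z w.
Proof.
move=> oz.
have al_ent_sub : \forall w \near z, forall i j, al_ent w i j -> al_ent z i j.
  by apply: near_forall => i; apply: near_forall => j; exact: al_ent_near_inv.
have ent_near : \forall w \near z,
    forall i j, al_ent z i j -> aligned w i j -> entangled w i j.
  apply: near_forall => i; apply: near_forall => j.
  have [/(entangled_near oz)|_] := boolP (al_ent z i j); last exact: filterE.
  by apply: filterS => w ent_w _.
near=> w; split; near: w.
- exact: ordered_config_near.
- exact: al_ent_sub.
- exact: ent_near.
Unshelve. all: by end_near.
Qed.

Lemma dexterity_perturbation z w : small_perturbation z w ->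
  (dexterity z <= dexterity w)%N.
Proof. by case=> _ sub_wz _; exact: n_classes_refine sub_wz. Qed.

Lemma Ffilt_perturbation (t : int) z w :
  Ffilt t z -> small_perturbation z w -> Ffilt t w.
Proof.
move=> [_ le_z] pert; split; first by case: pert.
by apply: le_trans le_z _; rewrite lez_nat dexterity_perturbation.
Qed.

Lemma Ffilt_open (t : int) : open (@Ffilt R p k r t).
Proof.
rewrite openE => z Fz; apply: filterS (small_perturbation_near Fz.1) => w.
exact: Ffilt_perturbation.
Qed.

Lemma stratum_rel_closed (t : int) : rel_closed (@stratum R p k r t) (Ffilt t).
Proof.
exists (~` Ffilt (t - 1)); split; first exact/open_closedC/Ffilt_open.
by rewrite /stratum setDE setIC.
Qed.

Lemma stratumE (s : nat) z : (s <= r)%N ->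
  stratum s%:Z z <-> ordered_config z /\ dexterity z = (r - s)%N.
Proof.
move=> le_sr; split=> [[[oz le_z] not_le]|[oz dz]].
  have lt_z : ~ (r%:Z - (s%:Z - 1) <= (dexterity z)%:Z) by move=> le; apply: not_le.
  by split=> //; lia.
by split; [split=> //; rewrite dz; lia | case=> _; rewrite dz; lia].
Qed.

Definition class_root z : 'I_r -> 'I_r := fingraph.root (symclos (al_ent z)).

Definition classes_aligned z w := forall i, base w i = base w (class_root z i).

Lemma base_connect w i j : connect (symclos (al_ent w)) i j -> base w i = base w j.
Proof.
have cl : fingraph.closed (symclos (al_ent w)) [pred l | base w l == base w i].
  by move=> x y /orP[] /asboolP[al _]; rewrite !inE al.
by move=> /(closed_connect cl); rewrite !inE eqxx => /esym/eqP ->.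
Qed.

Lemma dexterity_perturbation_eq z w : small_perturbation z w ->
  dexterity w = dexterity z <-> classes_aligned z w.
Proof.
case=> _ sub_wz ent_w; split=> [eq_d i | cl_al].
  apply: base_connect; apply: (connect_refine_eq sub_wz eq_d).
  exact: connect_root.
have sub_zw : subrel (al_ent z) (al_ent w).
  move=> i j al_ij; apply/asboolP.
  suff al_w : aligned w i j by split; last exact: ent_w.
  rewrite /aligned (cl_al i) (cl_al j); congr (base w _).
  by apply/(fingraph.rootP (symclos_connect_sym _))/connect1; rewrite /symclos al_ij.
by apply/eqP; rewrite eqn_leq !n_classes_refine.
Qed.

Definition nonroot_coords z := [set x : 'I_r * 'I_p | x.1 != class_root z x.1]%SET.

Lemma card_nonroot_coords z : #|nonroot_coords z| = ((r - dexterity z) * p)%N.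
Proof.
have -> : nonroot_coords z =
    finset.setX (~: [set i in fingraph.roots (symclos (al_ent z))]) [set: 'I_p]%SET.
  by apply/setP => -[i q]; rewrite !inE andbT eq_sym.
rewrite cardsX cardsT card_ord cardsCs finset.setCK card_ord cardsE.
by rewrite -n_classesE.
Qed.

Definition class_misalignment z : mat -> 'rV[R]_#|nonroot_coords z| :=
  entry_diff (fun t => (enum_val t).1) (fun t => class_root z (enum_val t).1)
    (fun t => lshift k (enum_val t).2).

Lemma class_misalignment_eq0 z w :
  class_misalignment z w = 0 <-> classes_aligned z w.
Proof.
split=> [/entry_diff_eq0 eq_w i | cl_al]; last first.
  apply/entry_diff_eq0 => t.
  by have /rowP/(_ (enum_val t).2) := cl_al (enum_val t).1; rewrite !mxE.
apply/rowP => q; rewrite !mxE.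
have [<-//|neq_i] := eqVneq i (class_root z i).
have iqA : (i, q) \in nonroot_coords z by rewrite inE.
by have := eq_w (enum_rank_in iqA (i, q)); rewrite (enum_rankK_in iqA iqA).
Qed.

Lemma class_misalignment_onto z y : exists v, class_misalignment z v = y.
Proof.
apply: entry_diff_onto => [t t' [eq1 eq2] | t t'].
  apply: enum_val_inj; move: (enum_val t) (enum_val t') eq1 eq2.
  by move=> [i q] [i' q'] /= -> /val_inj ->.
apply/eqP => eq_root; have := enum_valP t'.
by rewrite inE -eq_root /class_root (root_root (symclos_connect_sym _)) eqxx.
Qed.

Lemma stratum_perturbationE (s : nat) a w : (s <= r)%N -> stratum s%:Z a ->
  small_perturbation a w -> stratum s%:Z w <-> class_misalignment a w = 0.
Proof.
move=> le_sr /(stratumE _ le_sr)[_ da] pert; split.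
  move=> /(stratumE _ le_sr)[_ dw].
  by apply/class_misalignment_eq0/(dexterity_perturbation_eq pert); rewrite dw da.
move=> /class_misalignment_eq0/(dexterity_perturbation_eq pert) dw.
have [ow _ _] := pert.
by apply/(stratumE _ le_sr); rewrite dw da.
Qed.

End Strata.

Theorem lemma4p7 (R : realType) (p k r s : nat) :
  (1 <= k)%N -> (s <= r - 1)%N -> (1 <= r)%N ->
  closed_submanifold_of (@stratum R p k r s%:Z) (@Ffilt R p k r s%:Z)
    (p * (r - s) + r * k)%N.
Proof.
move=> _ le_s_r1 _; have le_sr : (s <= r)%N by lia.
split; first exact: stratum_rel_closed.
split=> [z [] // | a Sa]; have [oa da] := (stratumE _ le_sr).1 Sa.
have [W [oW Wa W_pert]] : exists W, [/\ open W, W a & W `<=` small_perturbation a].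
  have : nbhs a (small_perturbation a) := small_perturbation_near oa.
  rewrite topology_structure.nbhsE.
  by move=> -[W [oW Wa] W_sub]; exists W.
exists #|nonroot_coords a|, W, (class_misalignment a); split.
  split=> //; last by move=> w /W_pert; apply: Ffilt_perturbation Sa.1.
  by rewrite card_nonroot_coords da subKn //; nia.
split; first exact: entry_diff_smooth.
split; last first.
  move=> x _ y; have [v <-] := class_misalignment_onto y.
  by exists v; rewrite derive_entry_diff.
apply/seteqP; split=> w [].
  by move=> Sw Ww; split=> //; apply/(stratum_perturbationE le_sr Sa (W_pert _ Ww)).
by move=> Ww gw0; split=> //; apply/(stratum_perturbationE le_sr Sa (W_pert _ Ww)).
Qed.
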